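(* In the setting of the 2-node sliced contraction (all $m_i=2$) with all sliced index dimensions equal, $L_i=L>2$ for $i=1,\dots,n$, the $f$-resilient number $f+2L^n-1$ is achievable (via the encoding $\tilde A^{(i,1)}(x)=\sum_{s=1}^{L}A^{(i,1)}_{s}x^{(s-1)L^{i-1}}$, $\tilde A^{(i,2)}(x)=\sum_{s=1}^{L}A^{(i,2)}_{s}x^{(L-s)L^{i-1}}$, each worker evaluating $\Phi$ on the encoded tensors at its own distinct point $x$), and the gain compared to naive replication is $\Delta=(L^n-1)(f-1)$.
   Context: Setting (sliced parallel tensor network contraction). A tensor network is contracted in parallel by ''slicing'' $n$ of its closed indices: index $i$ has dimension $L_i$ and is shared by $m_i$ tensors (an ''$m_i$-node index''), and the sliced indices are pairwise non-adjacent, i.e. no tensor carries two sliced indices. Fixing the value $s_i\in\{1,\dots,L_i\}$ of each sliced index turns each of the $m_i$ tensors attached to index $i$ into a sliced subtensor $A^{(i,j)}_{s_i}\in V_{i,j}$ ($j=1,\dots,m_i$), and contracting the rest of the network (all tensors not attached to sliced indices, together with all non-sliced indices) is a multilinear map $\Phi:\prod_{i=1}^n\prod_{j=1}^{m_i}V_{i,j}\to W$ over an infinite field $\mathbb{F}$. The sliced partition for $(s_1,\dots,s_n)$ is $\sigma_{s_1\cdots s_n}=\Phi(A^{(1,1)}_{s_1},\dots,A^{(1,m_1)}_{s_1},\dots,A^{(n,1)}_{s_n},\dots,A^{(n,m_n)}_{s_n})$, and the desired output is $\sigma_{\mathrm{final}}=\sum_{s_1,\dots,s_n}\sigma_{s_1\cdots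 s_n}$; there are $N=\prod_i L_i$ sliced partitions. Computing model: a master distributes work to workers; each worker evaluates $\Phi$ once on one input from each $V_{i,j}$ (so it has the same computational cost as computing one sliced partition) and returns the result; up to $f$ workers may fail, and nothing is recovered from a failed worker. The $f$-resilient number of a scheme is the total number of workers required so that $\sigma_{\mathrm{final}}$ can be retrieved despite any $f$ worker failures. Naive replication (each of the $N$ sliced partitions computed by $f+1$ workers) has $f$-resilient number $N(f+1)$; the gain of a scheme is $N(f+1)$ minus its $f$-resilient number. *)

From HB Require Import structures.
From mathcomp Require Import all_boot all_order all_algebra.
Set Implicit Arguments. Unset Strict Implicit. Unset Printing Implicit Defensive.
Import GRing.Theory.
Local Open Scope ring_scope.

(* Sliced index i (0-indexed, i < n) with its two attached tensors j = 0, 1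
   (the paper's j = 1, 2): index type of the inputs of Phi. *)
Definition slot (n : nat) := ('I_n * 'I_2)%type.

Definition multilinear (F : fieldType) (n : nat) (V : slot n -> lmodType F)
    (W : lmodType F) (Phi : (forall p, V p) -> W) : Prop :=
  forall (u : forall p, V p) (p : slot n) (a : F) (y z : V p),
    Phi (dfwith u (a *: y + z)) = a *: Phi (dfwith u y) + Phi (dfwith u z).

(* The sliced subtensors: A p s = A^{(i+1, j+1)}_{s+1} for p = (i, j), s < L. *)
Definition sigma_final (F : fieldType) (n L : nat) (V : slot n -> lmodType F)
    (W : lmodType F) (Phi : (forall p, V p) -> W)
    (A : forall p : slot n, 'I_L -> V p) : W :=
  \sum_(s : {ffun 'I_n -> 'I_L}) Phi (fun p => A p (s p.1)).

Definition encode (F : fieldType) (n L : nat) (V : slot n -> lmodType F)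
    (A : forall p : slot n, 'I_L -> V p) (a : F) : forall p : slot n, V p :=
  fun p => if p.2 == ord0
           then \sum_(s < L) (a ^+ (s * L ^ p.1)%N) *: A p s
           else \sum_(s < L) (a ^+ ((L - 1 - s) * L ^ p.1)%N) *: A p s.

Definition resilient_number (n L f : nat) : nat := (f + 2 * L ^ n - 1)%N.

From HB Require Import structures.
From mathcomp Require Import all_boot all_order all_algebra.
From mathcomp Require Import zify.
From Stdlib Require Import FunctionalExtensionality.
Import GRing.Theory.
Local Open Scope ring_scope.

(* Expanding Phi multilinearly, Phi (encode A a) is a polynomial in a whose
   coefficient of a^e is the sum of Phi over the assignments t of slices to
   tensors of encoding degree e.  Reading the slices of the first (resp. second)
   tensors as base-L digits, deg t = base(t_1) + (L^n - 1) - base(t_2), which is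
   below 2L^n - 1 and equals L^n - 1 exactly when both tensors of every index
   get the same slice, i.e. on the sliced partitions.  Any 2L^n - 1 surviving
   workers see this polynomial at distinct points, so inverting a Vandermonde
   matrix recovers the coefficient of a^(L^n - 1), which is sigma_final. *)

Section MultilinearExpansion.
Variables (F : fieldType) (P I : finType) (V : P -> lmodType F) (W : lmodType F).
Variable Phi : (forall p, V p) -> W.
Hypothesis Phi_multilinear : forall (u : forall p, V p) (p : P) (a : F) (y z : V p),
    Phi (dfwith u (a *: y + z)) = a *: Phi (dfwith u y) + Phi (dfwith u z).

Lemma multilinear0 u p : Phi (dfwith u (0 : V p)) = 0.
Proof.
have := Phi_multilinear u p 1 0 0; rewrite !scale1r !addr0 => /eqP.
by rewrite -subr_eq subrr eq_sym => /eqP.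
Qed.

Lemma multilinear_sum (J : Type) (r : seq J) u p (c : J -> F) (y : J -> V p) :
  Phi (dfwith u (\sum_(j <- r) c j *: y j)) = \sum_(j <- r) c j *: Phi (dfwith u (y j)).
Proof.
elim: r => [|j r IH]; first by rewrite !big_nil multilinear0.
by rewrite !big_cons Phi_multilinear IH.
Qed.

Definition agree_off (r : seq P) (t0 : {ffun P -> I}) : pred {ffun P -> I} :=
  fun t => [forall p, (p \notin r) ==> (t p == t0 p)].

Lemma sum_agree_off_cons (M : nmodType) (G : {ffun P -> I} -> M) q r t0 :
  q \notin r ->
  \sum_(t | agree_off (q :: r) t0 t) G t =
  \sum_(s : I) \sum_(t | agree_off r t0 t) G [ffun p => if p == q then s else t p].
Proof.
move=> qr; rewrite (partition_big (fun t : {ffun P -> I} => t q) xpredT) //.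
apply: eq_bigr => s _.
pose reset (t : {ffun P -> I}) := [ffun p => if p == q then t0 q else t p].
rewrite (reindex_onto (fun t : {ffun P -> I} => [ffun p => if p == q then s else t p]) reset).
  apply: eq_bigl => t; rewrite /reset ffunE !eqxx andbT.
  apply/andP/forallP => [[/forallP t_r /eqP t_q] p|t_r]; first apply/implyP => p_r.
    case: (eqVneq p q) => [->|pq]; first by rewrite -t_q !ffunE eqxx.
    by have := t_r p; rewrite !ffunE (negbTE pq) in_cons (negbTE pq) p_r.
  split; last by apply/eqP/ffunP => p; rewrite !ffunE; case: eqVneq => // ->;
    exact/esym/eqP/(implyP (t_r q)).
  apply/forallP => p; apply/implyP; rewrite in_cons negb_or => /andP[pq p_r].
  by rewrite ffunE (negbTE pq); exact: (implyP (t_r p)).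
move=> t /andP[_ /eqP t_q]; apply/ffunP => p; rewrite !ffunE.
by case: eqVneq => [->|].
Qed.

Variables (w : P -> I -> F) (B : forall p, I -> V p).

Lemma multilinear_expand_on (t0 : {ffun P -> I}) (r : seq P) : uniq r -> forall g : forall p, V p,
  Phi (fun p => if p \in r then \sum_(s : I) w p s *: B p s else g p) =
  \sum_(t | agree_off r t0 t)
    (\prod_(p <- r) w p (t p)) *: Phi (fun p => if p \in r then B p (t p) else g p).
Proof.
elim: r => [_ g|q r IH /andP[qr r_uniq] g].
  rewrite (big_pred1 t0) => [|t]; last first.
    apply/forallP/eqP => [t_t0|-> p]; last by rewrite eqxx.
    by apply/ffunP => p; apply/eqP/(implyP (t_t0 p)).
  by rewrite big_nil scale1r; congr Phi; apply: functional_extensionality_dep.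
rewrite sum_agree_off_cons //.
set X := fun p => \sum_(s : I) w p s *: B p s.
set u := fun p => if p \in r then X p else g p.
have -> : (fun p => if p \in q :: r then X p else g p) = dfwith u (X q).
  apply: functional_extensionality_dep => p; case: dfwithP => [|p' qp'].
    by rewrite mem_head.
  by rewrite in_cons eq_sym (negbTE qp').
rewrite multilinear_sum; apply: eq_bigr => s _.
have -> : dfwith u (B q s) = fun p => if p \in r then X p else dfwith g (B q s) p.
  apply: functional_extensionality_dep => p; case: dfwithP => [|p' qp'].
    by rewrite (negbTE qr) dfwith_in.
  by rewrite /u; case: ifP => // _; rewrite dfwith_out.
rewrite IH // scaler_sumr; apply: eq_bigr => t _.
rewrite scalerA big_cons ffunE eqxx; congr (_ * _ *: Phi _).
  by apply: eq_big_seq => p p_r; rewrite ffunE; case: eqVneq p_r qr => // ->->.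
apply: functional_extensionality_dep => p; rewrite ffunE in_cons.
case: (eqVneq p q) => [->|pq] /=; first by rewrite (negbTE qr) dfwith_in.
by case: ifP => // _; rewrite dfwith_out // eq_sym.
Qed.

Lemma multilinear_expand :
  Phi (fun p => \sum_(s : I) w p s *: B p s) =
  \sum_(t : {ffun P -> I}) (\prod_p w p (t p)) *: Phi (fun p => B p (t p)).
Proof.
have [t0 _ | no_ffun] := pickP (@predT {ffun P -> I}).
  have := @multilinear_expand_on t0 _ (enum_uniq P) (fun p => 0).
  have -> : (fun p => if p \in enum P then \sum_(s : I) w p s *: B p s else 0) =
            (fun p => \sum_(s : I) w p s *: B p s).
    by apply: functional_extensionality_dep => p; rewrite mem_enum.
  move=> ->; apply: eq_big => [t|t _]; first by apply/forallP => p; rewrite mem_enum.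
  rewrite big_enum; congr (_ *: Phi _).
  by apply: functional_extensionality_dep => p; rewrite mem_enum.
have := eq_card0 no_ffun; rewrite card_ffun => /eqP.
rewrite expn_eq0 => /andP[/eqP/card0_eq I0 /card_gt0P[p0 _]].
set X := fun p => \sum_(s : I) w p s *: B p s.
have -> : X = dfwith X (0 : V p0).
  apply: functional_extensionality_dep => p; case: dfwithP => // {p}.
  by rewrite /X big_pred0.
by rewrite multilinear0 big_pred0.
Qed.
End MultilinearExpansion.

Section CoefficientExtraction.
Context {F : fieldType} {N : nat} {y : 'I_N -> F}.
Hypothesis y_inj : injective y.

Lemma vandermonde_dual_basis (e0 : 'I_N) :
  exists c : 'I_N -> F, forall e : 'I_N, \sum_j c j * y j ^+ e = (e == e0)%:R.
Proof.
pose M := Vandermonde N (\row_j y j).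
have M_unit : M \in unitmx.
  rewrite unitmxE det_Vandermonde unitfE; apply/prodf_neq0 => i _.
  apply/prodf_neq0 => j ij; rewrite !mxE subr_eq0; apply/eqP => /y_inj ji.
  by rewrite ji ltnn in ij.
exists (fun j => invmx M j e0) => e.
have := congr1 (fun A : 'M_N => A e e0) (mulmxV M_unit); rewrite !mxE => <-.
by apply: eq_bigr => j _; rewrite !mxE mulrC.
Qed.

Lemma coef_extractor (W : lmodType F) (e0 : 'I_N) :
  exists c : 'I_N -> F, forall (T : finType) (deg : T -> 'I_N) (G : T -> W),
    \sum_j c j *: \sum_t y j ^+ deg t *: G t = \sum_(t | deg t == e0) G t.
Proof.
have [c c_dual] := vandermonde_dual_basis e0.
exists c => T deg G; under eq_bigr do rewrite scaler_sumr.
rewrite exchange_big [RHS]big_mkcond /=; apply: eq_bigr => t _.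
under eq_bigr do rewrite scalerA; rewrite -scaler_suml c_dual.
by case: eqP; rewrite ?scale1r ?scale0r.
Qed.
End CoefficientExtraction.

Section BaseExpansion.
Local Open Scope nat_scope.
Definition base_value {L n} (u : 'I_n -> 'I_L) : nat := \sum_(i < n) u i * L ^ i.

Lemma base_value_max {L n} (u : 'I_n -> 'I_L) : base_value u <= (L ^ n).-1.
Proof.
rewrite predn_exp big_distrr; apply: leq_sum => i _.
by rewrite leq_mul2r -ltnS (ltn_predK (ltn_ord (u i))) ltn_ord orbT.
Qed.

Lemma base_value_inj {L n} (u v : 'I_n -> 'I_L) : base_value u = base_value v -> u =1 v.
Proof.
elim: n u v => [|m IH] u v; first by move=> _ [].
rewrite /base_value !big_ord_recl !expn0 !muln1.
under eq_bigr do rewrite lift0 expnS mulnCA.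
under [X in _ = _ + X]eq_bigr do rewrite lift0 expnS mulnCA.
rewrite -!big_distrr /= => uv.
have L_gt0 : 0 < L by apply: leq_ltn_trans (ltn_ord (u ord0)).
have uv0 : u ord0 = v ord0.
  apply: val_inj; have := congr1 (modn^~ L) uv.
  by rewrite !(addnC _ (L * _)) !(mulnC L) !modnMDl !modn_small.
move: uv; rewrite uv0 => /addnI/eqP; rewrite eqn_mul2l gtn_eqF //= => /eqP uv_lift.
move=> i; case: (unliftP ord0 i) => [j ->|->] //; exact: IH _ _ uv_lift j.
Qed.
End BaseExpansion.

Lemma sum_ffun_diag (J I : finType) (M : nmodType) (G : {ffun J * 'I_2 -> I} -> M) :
  \sum_(t : {ffun J * 'I_2 -> I} | [forall j, t (j, ord0) == t (j, ord_max)]) G t =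
  \sum_(s : {ffun J -> I}) G [ffun p => s p.1].
Proof.
rewrite (reindex_onto (fun s : {ffun J -> I} => [ffun p => s p.1])
                      (fun t : {ffun J * 'I_2 -> I} => [ffun j => t (j, ord0)])) /=; last first.
  move=> t /forallP t_diag; apply/ffunP => -[j k]; rewrite !ffunE /=.
  case: k => -[|[|//]] k_lt; first by congr (t (j, _)); apply: val_inj.
  by rewrite (eqP (t_diag j)); congr (t (j, _)); apply: val_inj.
apply: eq_bigl => s; apply/andP; split.
  by apply/forallP => j; rewrite !ffunE.
by apply/eqP/ffunP => j; rewrite !ffunE.
Qed.

Section EncodingDegree.
Context {L n : nat}.

Definition slot_degree (p : slot n) (s : 'I_L) : nat :=
  ((if p.2 == ord0 then s : nat else L - 1 - s) * L ^ p.1)%N.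

Definition encoding_degree (t : {ffun slot n -> 'I_L}) : nat :=
  (\sum_p slot_degree p (t p))%N.

Lemma encodeE (F : fieldType) (V : slot n -> lmodType F) (A : forall p, 'I_L -> V p) a p :
  encode A a p = \sum_(s < L) a ^+ slot_degree p s *: A p s.
Proof. by rewrite /encode /slot_degree; case: ifP. Qed.

Lemma encoding_degree_base (t : {ffun slot n -> 'I_L}) :
  (encoding_degree t + base_value (fun i => t (i, ord_max)) =
   base_value (fun i => t (i, ord0)) + (L ^ n).-1)%N.
Proof.
rewrite /encoding_degree (eq_bigr (fun p => slot_degree (p.1, p.2) (t (p.1, p.2)))) => [|[]//].
rewrite -(pair_bigA _ (fun i k => slot_degree (i, k) (t (i, k)))) /=.
rewrite /base_value predn_exp big_distrr -!big_split /=; apply: eq_bigr => i _.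
rewrite !big_ord_recl big_ord0 addn0 /slot_degree /=.
have -> : lift ord0 (ord0 : 'I_1) = ord_max :> 'I_2 by apply: val_inj.
rewrite -addnA -mulnDl subn1 subnK //.
by rewrite -ltnS (ltn_predK (ltn_ord (t (i, ord0)))).
Qed.

Lemma encoding_degree_lt (t : {ffun slot n -> 'I_L}) :
  (0 < L)%N -> (encoding_degree t < 2 * L ^ n - 1)%N.
Proof.
move=> L_gt0; have : (0 < L ^ n)%N by rewrite expn_gt0 L_gt0.
have := encoding_degree_base t.
have := base_value_max (fun i => t (i, ord0)).
have := base_value_max (fun i => t (i, ord_max)).
lia.
Qed.

Lemma encoding_degree_eq (t : {ffun slot n -> 'I_L}) :
  (encoding_degree t == (L ^ n).-1) = [forall i, t (i, ord0) == t (i, ord_max)].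
Proof.
have deg_base := encoding_degree_base t.
apply/eqP/forallP => [deg_eq | t_diag].
  move: deg_base; rewrite deg_eq addnC => /addIn/base_value_inj t_diag i.
  by rewrite t_diag.
move: deg_base; rewrite [base_value _](eq_bigr (fun i => t (i, ord0) * L ^ i)%N).
  by rewrite addnC => /addnI.
by move=> i _; rewrite (eqP (t_diag i)).
Qed.
End EncodingDegree.

Lemma multilinear_encode (F : fieldType) (n L : nat) (V : slot n -> lmodType F)
    (W : lmodType F) (Phi : (forall p, V p) -> W) (A : forall p, 'I_L -> V p) a :
  multilinear Phi ->
  Phi (encode A a) =
  \sum_(t : {ffun slot n -> 'I_L}) a ^+ encoding_degree t *: Phi (fun p => A p (t p)).
Proof.
move=> Phi_ml.
have -> : encode A a = fun p => \sum_(s < L) a ^+ slot_degree p s *: A p s.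
  by apply: functional_extensionality_dep => p; rewrite encodeE.
by rewrite multilinear_expand //; apply: eq_bigr => t _; rewrite prodrXr.
Qed.

Theorem corollary1 (F : fieldType) (F_infinite : forall s : seq F, exists a : F, a \notin s)
    (n L f : nat) (hL : (2 < L)%N)
    (V : slot n -> lmodType F) (W : lmodType F) (Phi : (forall p, V p) -> W)
    (hPhi : multilinear Phi)
    (x : 'I_(resilient_number n L f) -> F) (hx : injective x)
    (Fail : {set 'I_(resilient_number n L f)}) (hFail : (#|Fail| <= f)%N) :
  (exists dec : ({k : 'I_(resilient_number n L f) | k \notin Fail} -> W) -> W,
     forall A : forall p : slot n, 'I_L -> V p,
       dec (fun k => Phi (encode A (x (val k)))) = sigma_final Phi A)
  /\
  ((L ^ n * (f + 1))%N%:Z - (resilient_number n L f)%:Z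
     = ((L ^ n)%N%:Z - 1) * (f%:Z - 1))%R.
Proof.
have L_gt0 : (0 < L)%N by apply: ltnW (ltnW hL).
have Ln_gt0 : (0 < L ^ n)%N by rewrite expn_gt0 L_gt0.
split; last by rewrite /resilient_number; move: (L ^ n)%N Ln_gt0 => X X_gt0; lia.
pose N := (2 * L ^ n - 1)%N.
have N_alive : (N <= #|{: {k | k \notin Fail}}|)%N.
  rewrite card_sig (eq_card (B := ~: Fail)) => [|k]; last by rewrite !inE.
  have := cardsC Fail; rewrite card_ord; move: #|Fail| #|~: Fail| hFail => a b.
  by rewrite /resilient_number /N; move: (L ^ n)%N => X; lia.
pose worker (j : 'I_N) := enum_val (widen_ord N_alive j).
have worker_inj : injective (fun j => x (val (worker j))).
  by move=> i j /hx/val_inj/enum_val_inj/(congr1 val) /= /val_inj.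
have e0_lt : ((L ^ n).-1 < N)%N by rewrite /N; move: (L ^ n)%N Ln_gt0 => X; lia.
have [c extract] := coef_extractor worker_inj W (Ordinal e0_lt).
exists (fun g => \sum_j c j *: g (worker j)) => A.
under eq_bigr do rewrite multilinear_encode //.
have /= -> := extract _ (fun t => Ordinal (encoding_degree_lt t L_gt0))
                        (fun t => Phi (fun p => A p (t p))).
under eq_bigl do rewrite -val_eqE /= encoding_degree_eq.
rewrite sum_ffun_diag; apply: eq_bigr => s _; congr Phi.
by apply: functional_extensionality_dep => p; rewrite ffunE.
Qed.
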